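(* Let $k=\delta n$ with $\delta = \omega(\log^{-1/3} n)$, let $G=(X\dot\cup Y,E)$ be a $k$-regular bipartite graph on $2n$ vertices, let $(S,T)$ be a cut of $G$, and let $G_1\sim G(p_1)$ with $p_1 = \frac{\log n - \log\log\log\log n}{k}$. W.v.h.p. the following holds: if $A\subseteq V$ is a partite set with $|A|\le n^{0.9}$ such that every $x\in A$ satisfies $\deg^{\mathrm{Par}}_{G_1}(x)\ge \frac{1}{1000}\log n$, then $A$ has at least $|A|\cdot\frac{1}{2000}\log n$ parallel neighbors in $G_1$.
   Context: $V=X\cup Y$. A set $A$ is partite if $A\subseteq X$ or $A\subseteq Y$. A cut is a pair $(S,T)$ with $S\subseteq X$, $T\subseteq Y$; cross edges w.r.t. $(S,T)$ are edges joining $S$ to $Y\setminus T$ or $X\setminus S$ to $T$, and all other edges are parallel. $\deg^{\mathrm{Par}}_{G_1}(x)$ is the number of parallel edges of $G_1$ incident to $x$; a parallel neighbor of $A$ in $G_1$ is a vertex joined to some vertex of $A$ by a parallel edge of $G_1$. $G(p)$ retains each edge of $G$ independently with probability $p$. A sequence of events $A_n$ holds with very high probability (w.v.h.p.) if $\log(\mathbb P[A_n^c])=-\Omega(\log n)$. *)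

From HB Require Import structures.
From mathcomp Require Import all_boot all_order all_algebra.
From mathcomp Require Import reals exp.
Set Implicit Arguments. Unset Strict Implicit. Unset Printing Implicit Defensive.
Import Order.TTheory GRing.Theory Num.Theory.
Local Open Scope ring_scope.

(* A bipartite graph G = (X ∪ Y, E) with X = Y = 'I_n (two disjoint copies),
   given by its bipartite adjacency  E x y  (x in X, y in Y).
   Edges are pairs (x, y) : 'I_n * 'I_n. *)
Definition edges (n : nat) (E : 'I_n -> 'I_n -> bool) : {set 'I_n * 'I_n} :=
  [set e | E e.1 e.2].

Definition bip_regular (n k : nat) (E : 'I_n -> 'I_n -> bool) : Prop :=
  (forall x : 'I_n, #|[set y | E x y]| = k) /\
  (forall y : 'I_n, #|[set x | E x y]| = k).

(* Cut (S, T), S ⊆ X, T ⊆ Y.  The edge xy is cross iff (x ∈ S, y ∉ T) or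
   (x ∉ S, y ∈ T); otherwise parallel. *)
Definition parallel (n : nat) (S T : {set 'I_n}) (x y : 'I_n) : bool :=
  (x \in S) == (y \in T).

Definition pardegX n (S T : {set 'I_n}) (F : {set 'I_n * 'I_n}) (x : 'I_n) : nat :=
  #|[set y | ((x, y) \in F) && parallel S T x y]|.
Definition pardegY n (S T : {set 'I_n}) (F : {set 'I_n * 'I_n}) (y : 'I_n) : nat :=
  #|[set x | ((x, y) \in F) && parallel S T x y]|.

Definition parnbrX n (S T : {set 'I_n}) (F : {set 'I_n * 'I_n}) (A : {set 'I_n})
  : {set 'I_n} :=
  [set y | [exists x in A, ((x, y) \in F) && parallel S T x y]].
Definition parnbrY n (S T : {set 'I_n}) (F : {set 'I_n * 'I_n}) (A : {set 'I_n})
  : {set 'I_n} :=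
  [set x | [exists y in A, ((x, y) \in F) && parallel S T x y]].

Definition Gp_prob (R : realType) n (E : 'I_n -> 'I_n -> bool) (p : R)
  (P : {set 'I_n * 'I_n} -> bool) : R :=
  \sum_(F : {set 'I_n * 'I_n} | (F \subset edges E) && P F)
     p ^+ #|F| * (1 - p) ^+ (#|edges E| - #|F|).

Definition good_event (R : realType) n (S T : {set 'I_n}) (F : {set 'I_n * 'I_n})
  : bool :=
  let L : R := ln (n%:R) in
  [forall A : {set 'I_n},
     ((#|A|%:R <= (n%:R : R) `^ (9 / 10)) &&
      [forall x in A, (pardegX S T F x)%:R >= L / 1000]) ==>
     ((#|parnbrX S T F A|)%:R >= (#|A|)%:R * (L / 2000))] &&
  [forall A : {set 'I_n},
     ((#|A|%:R <= (n%:R : R) `^ (9 / 10)) &&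
      [forall y in A, (pardegY S T F y)%:R >= L / 1000]) ==>
     ((#|parnbrY S T F A|)%:R >= (#|A|)%:R * (L / 2000))].

Definition p1 (R : realType) (n k : nat) : R :=
  (ln (n%:R) - ln (ln (ln (ln (n%:R))))) / k%:R.

From HB Require Import structures.
From mathcomp Require Import all_boot all_order all_algebra.
From mathcomp Require Import reals exp sequences.
From mathcomp Require Import ring lra.
Set Implicit Arguments. Unset Strict Implicit. Unset Printing Implicit Defensive.
Import Order.TTheory GRing.Theory Num.Theory.
Local Open Scope ring_scope.

(* If the event fails, some partite set A with 1 <= |A| <= n^0.9 has a
   parallel neighbourhood B with |B| < |A| L/2000 (L = log n) while G_1 has
   at least |A| L/1000 edges inside the cell A x B.  Since n < k L, the mean
   p1 |A| |B| of that edge count is tiny, and a union bound over (A, B) with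
   exponential moments does the rest: weighting B by e^(u (|A| L/2000 - |B|)),
   u = L - ln |A|, sums over all B at once, the edge count is tilted by e^v
   with v = u/2 + 4000, and each A then costs at most n^(-3 |A|). *)

Lemma markov_sum (R : realType) (I : finType) (Q P : pred I) (w g : I -> R) :
  (forall i, 0 <= w i) -> (forall i, Q i -> 0 <= g i) ->
  (forall i, Q i -> P i -> 1 <= g i) ->
  \sum_(i | Q i && P i) w i <= \sum_(i | Q i) w i * g i.
Proof.
move=> w0 g0 Pg1; rewrite big_mkcondr /=; apply: ler_sum => i Qi.
by case: ifP => Pi; [rewrite ler_peMr ?Pg1 | rewrite mulr_ge0 ?g0].
Qed.

Section BernoulliWeights.
Variables (R : realType) (T : finType).

Lemma sum_expr_card (z : R) : \sum_(B : {set T}) z ^+ #|B| = (1 + z) ^+ #|T|.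
Proof.
rewrite addrC -prodr_const (bigA_distr _ _ (fun _ => z) (fun _ => 1)).
by apply: eq_bigr => B _; rewrite -big_mkcond /= prodr_const.
Qed.

Lemma sum_expr_card_gt0 (z : R) :
  \sum_(B : {set T} | (0 < #|B|)%N) z ^+ #|B| = (1 + z) ^+ #|T| - 1.
Proof.
rewrite -sum_expr_card [in RHS](bigD1 set0) //= cards0 expr0 addrC addrK.
by apply: eq_bigl => B; rewrite card_gt0.
Qed.

Definition bernoulli_weight (D : {set T}) (p : R) (F : {set T}) : R :=
  p ^+ #|F| * (1 - p) ^+ (#|D| - #|F|).

Lemma bernoulli_weight_ge0 D p F : 0 <= p <= 1 -> 0 <= bernoulli_weight D p F.
Proof. by case/andP=> p0 p1; rewrite mulr_ge0 ?exprn_ge0 ?subr_ge0. Qed.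

Lemma bernoulli_weight_tiltE (D C F : {set T}) (p t : R) : F \subset D ->
  bernoulli_weight D p F * t ^+ #|F :&: C| =
  \prod_i (if i \in F then (if i \in D then p * (if i \in C then t else 1) else 0)
           else (if i \in D then 1 - p else 1)).
Proof.
move=> sFD; rewrite (bigID (mem F)) /=.
rewrite [X in _ = X * _](eq_bigr (fun i => p * (if i \in C then t else 1))); last first.
  by move=> i Fi; rewrite Fi (subsetP sFD i Fi).
rewrite [X in _ = _ * X](eq_bigr (fun i => if i \in D then 1 - p else 1)); last first.
  by move=> i /negbTE ->.
rewrite big_split /= !prodr_const -!big_mkcondr /= !prodr_const.
have -> : #|[pred i in F | i \in C]| = #|F :&: C| by apply: eq_card => i; rewrite !inE.
have -> : #|[pred i | i \notin F & i \in D]| = (#|D| - #|F|)%N.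
  by rewrite -[in RHS](setIidPr sFD) -cardsD; apply: eq_card => i; rewrite !inE.
rewrite /bernoulli_weight; ring.
Qed.

Lemma bernoulli_moment_le (D C : {set T}) (p t : R) : 0 <= p <= 1 -> 1 <= t ->
  \sum_(F : {set T} | F \subset D) bernoulli_weight D p F * t ^+ #|F :&: C|
  <= expR (p * t * #|C|%:R).
Proof.
move=> /andP[p0 p1] t1.
pose f i := if i \in D then p * (if i \in C then t else 1) else 0.
pose g i := if i \in D then 1 - p else 1.
have -> : \sum_(F : {set T} | F \subset D) bernoulli_weight D p F * t ^+ #|F :&: C|
          = \sum_(F : {set T}) \prod_i (if i \in F then f i else g i).
  rewrite big_mkcond /=; apply: eq_bigr => F _.
  case: ifP => [|/negbT/subsetPn [i iF iD]]; first exact: bernoulli_weight_tiltE.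
  by rewrite (bigD1 i) //= iF /f (negbTE iD) mul0r.
rewrite -bigA_distr.
have -> : p * t * #|C|%:R = \sum_i (if i \in C then p * t else 0).
  by rewrite -big_mkcond /= sumr_const mulr_natr.
rewrite expR_sum; apply: ler_prod => i _.
have t0 : 0 <= t by apply: le_trans t1.
change (0 <= f i + g i <= expR (if i \in C then p * t else 0)).
rewrite /f /g; case: (i \in D); case: (i \in C); rewrite ?expR0.
- rewrite addr_ge0 ?mulr_ge0 ?subr_ge0 //=.
  by apply: le_trans (expR_ge1Dx _); nra.
- by rewrite mulr1 subrKC lexx ler01.
- by rewrite add0r ler01 -expR0 ler_expR mulr_ge0.
- by rewrite add0r ler01 lexx.
Qed.

End BernoulliWeights.

Lemma sum_card_rel_le (I K : finType) (A : {set I}) (Q : I -> I -> bool)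
    (h : I * I -> K) (S : {set K}) :
  injective h -> (forall x y, x \in A -> Q x y -> h (x, y) \in S) ->
  (\sum_(x in A) #|[set y | Q x y]| <= #|S|)%N.
Proof.
move=> h_inj hS.
rewrite (eq_bigr (fun x => \sum_(y | Q x y) 1)%N); last first.
  by move=> x _; rewrite sum1_card cardsE.
rewrite pair_big_dep /= sum1_card -(card_imset _ h_inj).
apply/subset_leq_card/subsetP => _ /imsetP[[x y] /andP[xA Qxy] ->]; exact: hS.
Qed.

Section Cells.
Variable T : finType.

Definition cell (s : bool) (A B : {set T}) : {set T * T} :=
  if s then setX A B else setX B A.

Lemma card_cell s (A B : {set T}) : #|cell s A B| = (#|A| * #|B|)%N.
Proof. by case: s; rewrite cardsX // mulnC. Qed.

Variable R : realType.

Definition small_part (L : R) (A : {set T}) : bool :=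
  (0 < #|A|)%N && (ln (#|A|%:R : R) <= 9 / 10 * L).

Definition dense_cell (L : R) (F : {set T * T}) (s : bool) (A B : {set T}) : bool :=
  (#|B|%:R < #|A|%:R * (L / 2000)) && (#|A|%:R * (L / 1000) <= #|F :&: cell s A B|%:R).

End Cells.

Section Expansion.
Variables (R : realType) (n : nat) (S T : {set 'I_n}) (F : {set 'I_n * 'I_n}).

Lemma sum_pardegX_le (A : {set 'I_n}) :
  (\sum_(x in A) pardegX S T F x <= #|F :&: cell true A (parnbrX S T F A)|)%N.
Proof.
rewrite /pardegX; apply: (sum_card_rel_le (@inj_id _)) => x y xA /andP[xyF par].
by rewrite !inE xyF xA /=; apply/existsP; exists x; rewrite xA xyF par.
Qed.

Lemma sum_pardegY_le (A : {set 'I_n}) :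
  (\sum_(y in A) pardegY S T F y <= #|F :&: cell false A (parnbrY S T F A)|)%N.
Proof.
have swap_inj : injective (fun u : 'I_n * 'I_n => (u.2, u.1)).
  by move=> [? ?] [? ?] [-> ->].
rewrite /pardegY; apply: (sum_card_rel_le swap_inj) => y x yA /andP[xyF par].
by rewrite !inE xyF yA andbT /=; apply/existsP; exists y; rewrite yA xyF par.
Qed.

Lemma dense_cell_of_low_expansion (deg : 'I_n -> nat) s (A N : {set 'I_n}) :
  let L := ln (n%:R : R) in
  #|A|%:R <= (n%:R : R) `^ (9 / 10) -> (forall x, x \in A -> L / 1000 <= (deg x)%:R) ->
  #|N|%:R < #|A|%:R * (L / 2000) -> (\sum_(x in A) deg x <= #|F :&: cell s A N|)%N ->
  small_part L A && dense_cell L F s A N.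
Proof.
move=> L Asmall Adeg Nsmall degF.
have A0 : (0 < #|A|)%N.
  by rewrite lt0n; apply: contraTneq Nsmall => ->; rewrite mul0r ltNge ler0n.
apply/and3P; split; [apply/andP; split => // | exact: Nsmall |].
  have n0 : (0 < n)%N by rewrite -(card_ord n); apply: leq_trans A0 (max_card _).
  by rewrite /L -ln_powR ler_ln ?posrE ?ltr0n ?powR_gt0 ?ltr0n.
apply: le_trans (_ : (\sum_(x in A) deg x)%:R <= _); last by rewrite ler_nat.
by rewrite natr_sum mulr_natl -sumr_const; apply: ler_sum.
Qed.

Lemma not_good_event_dense_cell :
  ~~ good_event R S T F -> exists s (A B : {set 'I_n}),
    small_part (ln (n%:R : R)) A && dense_cell (ln (n%:R : R)) F s A B.
Proof.
rewrite negb_and => /orP[] /forallPn[A]; rewrite negb_imply -ltNge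
  => /andP[/andP[Asmall /forall_inP Adeg] Nsmall].
- exists true, A, (parnbrX S T F A).
  exact: dense_cell_of_low_expansion Asmall Adeg Nsmall (sum_pardegX_le A).
- exists false, A, (parnbrY S T F A).
  exact: dense_cell_of_low_expansion Asmall Adeg Nsmall (sum_pardegY_le A).
Qed.

End Expansion.

Section RealInequalities.
Variable R : realType.

Lemma ler_sum_term (I : finType) (P : pred I) (f : I -> R) j :
  P j -> (forall i, P i -> 0 <= f i) -> f j <= \sum_(i | P i) f i.
Proof.
move=> Pj f0; rewrite (bigD1 j) //= lerDl.
by apply: sumr_ge0 => i /andP[Pi _]; exact: f0.
Qed.

Lemma expr1D_le_expR (x : R) m : 0 <= 1 + x -> (1 + x) ^+ m <= expR (m%:R * x).
Proof.
move=> x1; rewrite expRM_natl; apply: lerXn2r; rewrite ?nnegrE ?expR_ge0 //.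
exact: expR_ge1Dx.
Qed.

Lemma expR_sub1_le (x : R) : 0 <= x <= 1 / 2 -> expR x - 1 <= 2 * x.
Proof.
case/andP=> x0 xh.
have ex0 := expR_gt0 x.
have : 1 - x <= (expR x)^-1 by rewrite -expRN expR_ge1Dx.
rewrite -(ler_pM2r ex0) mulVf ?gt_eqF //; nra.
Qed.

Lemma cube_le_expR (x : R) : 0 <= x -> x ^+ 3 / 6 <= expR x.
Proof.
move=> x0; apply: le_trans (expR_ge1Dxn 2 x0).
have -> : (3`!)%:R = 6 :> R by [].
by rewrite lerDr.
Qed.

(* 48000 = 6 * 20^3 turns e^(L/20) >= (L/20)^3/6 into L^2 e^4000 <= e^(L/20);
   e^e makes ln (ln (ln L)) nonnegative. *)
Definition log_threshold : R := (48 * 1000) * expR 4000 + expR (expR 1).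

Lemma log_threshold_le (L : R) : log_threshold <= L ->
  [/\ (48 * 1000) * expR 4000 <= L, expR (expR 1) <= L & 6 <= L].
Proof.
rewrite /log_threshold => HL.
have e4 := expR_ge1Dx (4000 : R); have ee := expR_ge0 (expR (1 : R)).
split; lra.
Qed.

Lemma tilted_density_le1 (L a p : R) :
  log_threshold <= L -> 1 <= a -> ln a <= 9 / 10 * L -> 0 <= p ->
  p * expR L <= L ^+ 2 -> p * expR ((L - ln a) / 2 + 4000) * a <= 1.
Proof.
move=> /log_threshold_le[Lbig _ L6] a1 la p0 pL.
have e4 := expR_gt0 (4000 : R).
have -> : p * expR ((L - ln a) / 2 + 4000) * a =
          (p * expR L) * expR (4000 - (L - ln a) / 2).
  set l := ln a; have -> : a = expR l by rewrite /l lnK // posrE; lra.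
  by rewrite -!mulrA -!expRD; congr (_ * expR _); lra.
apply: le_trans (_ : L ^+ 2 * expR (4000 - L / 20) <= 1).
  by apply: ler_pM; rewrite ?mulr_ge0 ?expR_ge0 // ler_expR; lra.
rewrite expRB mulrA ler_pdivrMr ?expR_gt0 // mul1r.
have cube := cube_le_expR (_ : 0 <= L / 20); apply: le_trans (cube _); last lra.
have -> : (L / 20) ^+ 3 / 6 = L ^+ 2 * (L / (48 * 1000)).
  by rewrite !exprS expr0; field.
by rewrite ler_wpM2l ?exprn_ge0 // ?ler_pdivlMr; lra.
Qed.

Lemma ln_ln_ln_bounds (L : R) : expR (expR 1) <= L -> 0 <= ln (ln (ln L)) <= L.
Proof.
move=> eeL.
have lnL : expR 1 <= ln L.
  by rewrite -ler_expR lnK // posrE; apply: lt_le_trans eeL; apply: expR_gt0.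
have llnL : 1 <= ln (ln L).
  by rewrite -ler_expR lnK // posrE; apply: lt_le_trans lnL; apply: expR_gt0.
rewrite ln_ge0 //=.
have := ln_sublinear (lt_le_trans ltr01 llnL).
have := ln_sublinear (lt_le_trans (expR_gt0 1) lnL).
have := ln_sublinear (lt_le_trans (expR_gt0 _) eeL).
lra.
Qed.

Lemma lt_degree_mul_ln (n K : nat) (L : R) : 0 < n%:R :> R -> 1 <= L ->
  1 < K%:R / n%:R * L `^ 3^-1 -> n%:R < K%:R * L.
Proof.
move=> n0 L1 growth.
have : 1 < K%:R / n%:R * L.
  apply: lt_le_trans growth _; rewrite ler_wpM2l ?divr_ge0 ?ler0n //.
  by apply: ler1_powR => //; rewrite invf_le1 ?ler1n.
by rewrite mulrAC ltr_pdivlMr // mul1r.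
Qed.

Lemma p1_bounds (n K : nat) : let L := ln (n%:R : R) in
  log_threshold <= L -> n%:R = expR L -> n%:R < K%:R * L ->
  0 <= p1 R n K <= 1 /\ p1 R n K * expR L <= L ^+ 2.
Proof.
move=> L HL nL nKL; have [_ eeL L6] := log_threshold_le HL.
have /andP[l3_ge0 l3_le] := ln_ln_ln_bounds eeL.
have n0 : 0 < (n%:R : R) by rewrite nL expR_gt0.
have K0 : 0 < (K%:R : R).
  by rewrite ltr0n lt0n; apply: contraTneq nKL => ->; rewrite mul0r ltNge ltW.
have pK : p1 R n K * K%:R = L - ln (ln (ln L)) by rewrite /p1 divfK // gt_eqF.
have p0 : 0 <= p1 R n K by rewrite /p1 divr_ge0 ?subr_ge0 // ltW.
have p_small : p1 R n K * expR L <= L ^+ 2.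
  by rewrite -nL -(ler_pM2r K0) mulrAC pK; nra.
have L2 : L ^+ 2 <= expR L.
  by have := cube_le_expR (_ : 0 <= L); rewrite !exprS expr0; nra.
split => //; rewrite p0 /= -(ler_pM2r (expR_gt0 L)) mul1r.
exact: le_trans p_small L2.
Qed.

End RealInequalities.

Section UnionBound.
Variables (R : realType) (T : finType) (L p : R).
Hypotheses (card_T : #|T|%:R = expR L) (L_large : log_threshold R <= L)
  (p01 : 0 <= p <= 1) (p_small : p * expR L <= L ^+ 2).

Definition tilt (s : bool) (A B : {set T}) (F : {set T * T}) : R :=
  let a := #|A|%:R in let u := L - ln a in
  expR (u * (a * (L / 2000) - #|B|%:R)
        + (u / 2 + 4000) * (#|F :&: cell s A B|%:R - a * (L / 1000))).

Lemma tilt_ge1 s A B F : small_part L A -> dense_cell L F s A B -> 1 <= tilt s A B F.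
Proof.
case/andP=> A0 la /andP[Bsmall Fdense]; have [_ _ L6] := log_threshold_le L_large.
have a0 : 0 <= ln (#|A|%:R : R) by rewrite ln_ge0 // ler1n.
by rewrite -expR0 ler_expR; apply: addr_ge0; apply: mulr_ge0; lra.
Qed.

Lemma sum_tilt_le s (A : {set T}) (D : {set T * T}) : small_part L A ->
  \sum_(B : {set T}) \sum_(F : {set T * T} | F \subset D)
     bernoulli_weight D p F * tilt s A B F <= expR (- 3 * L) ^+ #|A|.
Proof.
case/andP=> A0 la; have [_ eeL L6] := log_threshold_le L_large.
have a1 : 1 <= (#|A|%:R : R) by rewrite ler1n.
set a := (#|A|%:R : R) in a1 la *.
set u := L - ln a; set v := u / 2 + 4000.
have v0 : 0 <= v by have := ln_ge0 a1; rewrite /v /u; lra.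
have tiltE B F : tilt s A B F =
    expR (- 4 * L * a) * (expR (- u) ^+ #|B| * expR v ^+ #|F :&: cell s A B|).
  by rewrite /tilt -!expRM_natl -!expRD; congr expR; rewrite /v /u /a; field.
have per_B B : \sum_(F : {set T * T} | F \subset D) bernoulli_weight D p F * tilt s A B F
    <= expR (- 4 * L * a) * expR (p * expR v * a - u) ^+ #|B|.
  have -> : \sum_(F : {set T * T} | F \subset D) bernoulli_weight D p F * tilt s A B F
      = expR (- 4 * L * a) * (expR (- u) ^+ #|B| * \sum_(F : {set T * T} | F \subset D)
          bernoulli_weight D p F * expR v ^+ #|F :&: cell s A B|).
    by rewrite !mulr_sumr; apply: eq_bigr => F _; rewrite tiltE; ring.
  rewrite ler_wpM2l ?expR_ge0 //.
  apply: le_trans (ler_wpM2l (exprn_ge0 _ (expR_ge0 _)) (bernoulli_moment_le _ _ p01 _)) _.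
    by rewrite -expR0 ler_expR.
  by rewrite card_cell natrM -!expRM_natl -expRD ler_expR -/a; lra.
apply: le_trans (ler_sum _ (fun B _ => per_B B)) _.
rewrite -mulr_sumr sum_expr_card -expRM_natl -/a.
apply: le_trans (ler_wpM2l (expR_ge0 _) (expr1D_le_expR _ _)) _.
  by rewrite addr_ge0 ?expR_ge0.
have -> : #|T|%:R * expR (p * expR v * a - u) = a * expR (p * expR v * a).
  rewrite card_T -expRD /u (_ : L + _ = p * expR v * a + ln a); last by ring.
  by rewrite expRD lnK ?posrE 1?mulrC //; lra.
have tilt1 : p * expR v * a <= 1.
  by apply: tilted_density_le1 => //; case/andP: p01.
have : expR (p * expR v * a) <= L.
  by apply: le_trans (_ : expR 1 <= L); [rewrite ler_expR | have := expR_ge1Dx (expR (1 : R)); lra].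
rewrite -expRD ler_expR => eL.
have : a * expR (p * expR v * a) <= a * L by rewrite ler_wpM2l //; lra.
lra.
Qed.

Lemma bernoulli_dense_cell_le (D : {set T * T}) (bad : pred {set T * T}) :
  (forall F, bad F -> exists s (A B : {set T}), small_part L A && dense_cell L F s A B) ->
  \sum_(F : {set T * T} | (F \subset D) && bad F) bernoulli_weight D p F <= expR (- L).
Proof.
move=> bad_dense; have [_ _ L6] := log_threshold_le L_large.
pose g F := \sum_(s : bool) \sum_(A | small_part L A) \sum_(B : {set T}) tilt s A B F.
have tilt_ge0 s A B F : 0 <= tilt s A B F by apply: expR_ge0.
apply: le_trans (@markov_sum _ _ _ _ _ g _ _ _) _.
- by move=> F; apply: bernoulli_weight_ge0.
- by move=> F _; do 3!apply: sumr_ge0 => ? _.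
- move=> F _ /bad_dense[s [A [B /andP[As dense]]]].
  apply: le_trans (tilt_ge1 As dense) _.
  apply: le_trans (ler_sum_term (P := xpredT) isT (fun B' _ => tilt_ge0 s A B' F)) _.
  apply: le_trans (ler_sum_term As (fun A' _ => sumr_ge0 _ (fun B' _ => tilt_ge0 s A' B' F))) _.
  apply: (ler_sum_term (P := xpredT) isT) => s' _.
  by apply: sumr_ge0 => A' _; apply: sumr_ge0.
set r := expR (- 3 * L).
apply: le_trans (_ : \sum_(s : bool) \sum_(A : {set T} | (0 < #|A|)%N) r ^+ #|A| <= _).
  under eq_bigr do rewrite mulr_sumr; rewrite exchange_big /=; apply: ler_sum => s _.
  under eq_bigr do rewrite mulr_sumr; rewrite exchange_big /= big_mkcondr /=.
  apply: ler_sum => A A0; case: ifP => As; last by rewrite exprn_ge0 ?expR_ge0.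
  under eq_bigr do rewrite mulr_sumr; rewrite exchange_big /=.
  by apply: sum_tilt_le; apply/andP.
set y := expR (- L); set x := y * y.
have yL : y * expR L = 1 by rewrite /y -expRD addNr expR0.
have y0 := expR_gt0 (- L); have := expR_ge1Dx L => eL.
have y4 : 4 * y <= 1 by nra.
have x_half : 0 <= x <= 1 / 2 by apply/andP; split; rewrite /x; nra.
have r_card : #|T|%:R * r = x by rewrite card_T /x /y /r -!expRD; congr expR; ring.
rewrite sumr_const card_bool sum_expr_card_gt0 mulr2n.
have : (1 + r) ^+ #|T| - 1 <= 2 * x.
  apply: le_trans (expR_sub1_le x_half); rewrite lerD2r -r_card.
  by apply: expr1D_le_expR; rewrite addr_ge0 ?expR_ge0.
have : 4 * x <= y by rewrite /x; nra.
lra.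
Qed.

End UnionBound.

Theorem lemma3p6 (R : realType) (k : nat -> nat)
  (E : forall n : nat, 'I_n -> 'I_n -> bool)
  (S T : forall n : nat, {set 'I_n}) :
  (forall n, bip_regular (k n) (E n)) ->
  (forall M : R, exists N : nat, forall n : nat, (N <= n)%N ->
     M < ((k n)%:R / n%:R) * (ln (n%:R : R)) `^ (3^-1)) ->
  exists c : R, 0 < c /\ exists N : nat, forall n : nat, (N <= n)%N ->
    Gp_prob (E n) (p1 R n (k n)) (fun F => ~~ good_event R (S n) (T n) F)
      <= (n%:R : R) `^ (- c).
Proof.
move=> _ growth.
have [N1 growth1] := growth 1.
have [N2 N2_large] : exists N2 : nat, expR (log_threshold R) < N2%:R.
  by exists (Num.bound (expR (log_threshold R))); apply/archi_boundP/expR_ge0.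
exists 1; split => //; exists (maxn N1 N2) => n; rewrite geq_max => /andP[nN1 nN2].
set L := ln (n%:R : R).
have n_large : expR (log_threshold R) < n%:R.
  by apply: lt_le_trans N2_large _; rewrite ler_nat.
have nL : n%:R = expR L by rewrite /L lnK // posrE (lt_trans (expR_gt0 _) n_large).
have HL : log_threshold R <= L by rewrite -ler_expR -nL ltW.
have L1 : 1 <= L by have [_ _] := log_threshold_le HL; lra.
have nKL := lt_degree_mul_ln (lt_trans (expR_gt0 _) n_large) L1 (growth1 n nN1).
have [p01 p_small] := p1_bounds HL nL nKL.
rewrite powR_inv1 ?ler0n // nL -expRN.
apply: (bernoulli_dense_cell_le _ HL p01 p_small) => [|F /not_good_event_dense_cell //].
by rewrite card_ord.
Qed.
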